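(* Let $\mathcal{AF}_{\vdash}=(\vdash,\overline{\cdot},\widehat{\cdot})$ be a setting that satisfies Pre-Relevance. Then for each $\mathsf{Sem}\in\{\mathsf{Grd},\mathsf{Prf}\}$ the consequence relation $\mathrel{\mid\!\sim}^{\mathcal{AF}_{\vdash}}_{\mathsf{Sem}}$ satisfies Non-Interference: for all $\mathcal{S}_1\cup\{\phi\}\cup\mathcal{S}_2\subseteq\mathcal{L}$ with $(\mathcal{S}_1\cup\{\phi\})\mid\mathcal{S}_2$, we have $\mathcal{S}_1\mathrel{\mid\!\sim}_{\mathsf{Sem}}\phi$ iff $\mathcal{S}_1\cup\mathcal{S}_2\mathrel{\mid\!\sim}_{\mathsf{Sem}}\phi$.
   Context: $\mathcal{L}$ is the set of formulas of a language built from propositional atoms; for $\mathcal{S}\subseteq\mathcal{L}$, $\mathsf{Atoms}(\mathcal{S})$ is the set of atoms occurring in formulas of $\mathcal{S}$, and $\mathcal{S}_1\mid\mathcal{S}_2$ means $\mathsf{Atoms}(\mathcal{S}_1)\cap\mathsf{Atoms}(\mathcal{S}_2)=\emptyset$. $\wp_{\sf fin}(X)$ is the set of finite subsets of $X$. A setting is a triple $(\vdash,\overline{\cdot},\widehat{\cdot})$ where ${\vdash}\subseteq\wp_{\sf fin}(\mathcal{L})\times\mathcal{L}$ is an arbitrary relation (no reflexivity, monotonicity or transitivity assumed), $\overline{\cdot}:\mathcal{L}\to\wp(\mathcal{L})$ is a contrariness function, and $\widehat{\cdot}$ assigns to each nonempty finite set of formulas a finite set of formulas (with the convention $\widehat{\emptyset}=\emptyset$).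 For $\mathcal{S}\subseteq\mathcal{L}$, $\mathit{Arg}_{\vdash}(\mathcal{S})$ is the set of pairs $(\Gamma,\gamma)$ with $\Gamma\subseteq\mathcal{S}$ finite and $\Gamma\vdash\gamma$; $\mathsf{Supp}((\Gamma,\gamma))=\Gamma$, $\mathsf{Conc}((\Gamma,\gamma))=\gamma$. $\mathcal{AF}_{\vdash}(\mathcal{S})$ is the directed graph on $\mathit{Arg}_{\vdash}(\mathcal{S})$ in which $(\Gamma,\gamma)$ attacks $(\Gamma',\gamma')$ iff $\gamma\in\overline{\phi}$ for some $\phi\in\widehat{\Gamma'}$. For $\mathcal{A}\subseteq\mathit{Arg}_{\vdash}(\mathcal{S})$: conflict-free = no member attacks a member; $\mathcal{A}$ defends $a$ iff every attacker of $a$ in $\mathit{Arg}_{\vdash}(\mathcal{S})$ is attacked by some member of $\mathcal{A}$; admissible = conflict-free and defends all its members; complete = admissible and contains every argument it defends; preferred = $\subseteq$-maximal complete; grounded = the $\subseteq$-minimal complete set; stable = admissible and attacks every argument not in it. $\mathsf{Grd},\mathsf{Prf}$ denote these semantics. Consequence: $\mathcal{S}\mathrel{\mid\!\sim}^{\mathcal{AF}_{\vdash}}_{\mathsf{Sem}}\phi$ iff every $\mathsf{Sem}$-extension of $\mathcal{AF}_{\vdash}(\mathcal{S})$ contains an argument with conclusion $\phi$. Pre-Relevance: (a) $\vdash$ is Pre-Relevant iff for all $\mathcal{S}_1,\mathcal{S}_2,\phi$ with $\mathcal{S}_1\cup\{\phi\}\mid\mathcal{S}_2$, if $\mathcal{S}_1\cup\mathcal{S}_2\vdash\phi$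 then $\mathcal{S}_1'\vdash\phi$ for some $\mathcal{S}_1'\subseteq\mathcal{S}_1$. (b) The setting is prime iff for all sets of atoms $\mathcal{A}_1\mid\mathcal{A}_2$, all finite $\mathcal{S}_1,\mathcal{T}_1,\mathcal{S}_2,\mathcal{T}_2$ with $\mathsf{Atoms}(\mathcal{S}_i),\mathsf{Atoms}(\mathcal{T}_i)\subseteq\mathcal{A}_i$, and all $\phi,\psi$ with $\psi\in\overline{\phi}$ and $\phi\in\widehat{\mathcal{T}_1\cup\mathcal{T}_2}$: if $\mathcal{S}_1\cup\mathcal{S}_2\vdash\psi$ then there are $i\in\{1,2\}$, $\mathcal{S}_i'\subseteq\mathcal{S}_i$, $\phi_i\in\widehat{\mathcal{T}_i}$ and $\psi_i\in\overline{\phi_i}$ with $\mathcal{S}_i'\vdash\psi_i$. (c) A setting satisfies Pre-Relevance iff $\vdash$ is Pre-Relevant, the setting is prime, and $\widehat{\Delta}\subseteq\widehat{\Delta\cup\Delta'}$ for all finite $\Delta,\Delta'$. *)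

From HB Require Import structures.
From mathcomp Require Import all_boot.
From mathcomp Require Import finmap.

Set Implicit Arguments.
Unset Strict Implicit.
Unset Printing Implicit Defensive.

Local Open Scope fset_scope.

Section Setting.

(* L : the formulas; Atom : propositional atoms; atoms x a : atom a occurs in x *)
Variables (L : choiceType) (Atom : Type) (atoms : L -> Atom -> Prop).
Variable derives : {fset L} -> L -> Prop.
Variable contr : L -> L -> Prop.
Variable hat : {fset L} -> {fset L}.

Definition AtomsOf (S : L -> Prop) : Atom -> Prop :=
  fun a => exists x, S x /\ atoms x a.

Definition fs (G : {fset L}) : L -> Prop := fun x => x \in G.

Definition indep (S1 S2 : L -> Prop) : Prop :=
  forall a, AtomsOf S1 a -> AtomsOf S2 a -> False.

Definition unionP (S1 S2 : L -> Prop) : L -> Prop := fun x => S1 x \/ S2 x.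
Definition singleP (phi : L) : L -> Prop := fun x => x = phi.

Definition pre_relevant_derives : Prop :=
  forall (S1 S2 : {fset L}) (phi : L),
    indep (unionP (fs S1) (singleP phi)) (fs S2) ->
    derives (S1 `|` S2) phi ->
    exists S1' : {fset L}, S1' `<=` S1 /\ derives S1' phi.

Definition prime_setting : Prop :=
  forall (A1 A2 : Atom -> Prop),
    (forall a, A1 a -> A2 a -> False) ->
    forall (S1 T1 S2 T2 : {fset L}),
      (forall a, AtomsOf (fs S1) a -> A1 a) ->
      (forall a, AtomsOf (fs T1) a -> A1 a) ->
      (forall a, AtomsOf (fs S2) a -> A2 a) ->
      (forall a, AtomsOf (fs T2) a -> A2 a) ->
      forall phi psi : L,
        contr phi psi -> phi \in hat (T1 `|` T2) ->
        derives (S1 `|` S2) psi ->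
        (exists (S1' : {fset L}) (phi1 psi1 : L),
            S1' `<=` S1 /\ phi1 \in hat T1 /\ contr phi1 psi1 /\ derives S1' psi1)
        \/
        (exists (S2' : {fset L}) (phi2 psi2 : L),
            S2' `<=` S2 /\ phi2 \in hat T2 /\ contr phi2 psi2 /\ derives S2' psi2).

Definition setting_pre_relevance : Prop :=
  [/\ pre_relevant_derives, prime_setting &
      forall D D' : {fset L}, hat D `<=` hat (D `|` D')].

Definition arg := ({fset L} * L)%type.
Definition Supp (a : arg) : {fset L} := a.1.
Definition Conc (a : arg) : L := a.2.

Definition isArg (S : L -> Prop) (a : arg) : Prop :=
  (forall x, x \in Supp a -> S x) /\ derives (Supp a) (Conc a).

Definition attacks (a b : arg) : Prop :=
  exists phi, phi \in hat (Supp b) /\ contr phi (Conc a).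

Definition conflict_free (E : arg -> Prop) : Prop :=
  forall a b, E a -> E b -> ~ attacks a b.

Definition defends (S : L -> Prop) (E : arg -> Prop) (a : arg) : Prop :=
  forall b, isArg S b -> attacks b a -> exists c, E c /\ attacks c b.

Definition admissible (S : L -> Prop) (E : arg -> Prop) : Prop :=
  (forall a, E a -> isArg S a) /\ conflict_free E /\
  (forall a, E a -> defends S E a).

Definition complete (S : L -> Prop) (E : arg -> Prop) : Prop :=
  admissible S E /\ (forall a, isArg S a -> defends S E a -> E a).

Definition subE (E E' : arg -> Prop) : Prop := forall a, E a -> E' a.

(* the ⊆-least (= the ⊆-minimal) complete extension *)
Definition grounded (S : L -> Prop) (E : arg -> Prop) : Prop :=
  complete S E /\ (forall E', complete S E' -> subE E E').

Definition preferred (S : L -> Prop) (E : arg -> Prop) : Prop :=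
  complete S E /\ (forall E', complete S E' -> subE E E' -> subE E' E).

End Setting.

Inductive sem := Grd | Prf.

Definition extension (s : sem) (L : choiceType)
  (derives : {fset L} -> L -> Prop) (contr : L -> L -> Prop)
  (hat : {fset L} -> {fset L}) (S : L -> Prop) (E : arg L -> Prop) : Prop :=
  match s with
  | Grd => grounded derives contr hat S E
  | Prf => preferred derives contr hat S E
  end.

Definition nmsim (s : sem) (L : choiceType)
  (derives : {fset L} -> L -> Prop) (contr : L -> L -> Prop)
  (hat : {fset L} -> {fset L}) (S : L -> Prop) (phi : L) : Prop :=
  forall E, extension s derives contr hat S E ->
    exists a, E a /\ Conc a = phi.

(** Because S1 ∪ {phi} and S2 share no atoms, S2 is irrelevant to arguments
    supported in S1.  Primeness, applied with the attacked support entirely on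
    the S1 side (the S2 side is empty, and so is its hat), shows that every
    attack on such an argument is already carried by the S1-part of the
    attacker's support; pre-relevance shrinks every derivation of phi from
    S1 ∪ S2 to one from S1.  Hence restricting a grounded (resp. preferred)
    extension of S1 ∪ S2 to the arguments over S1 gives the grounded (resp. a
    preferred) extension of S1, and every such extension of S1 contains the
    restriction of one of S1 ∪ S2.  Complete extensions are closed under
    passing to arguments with smaller support, so an argument for phi in an
    extension of S1 ∪ S2 yields one over S1 in the same extension. *)

From mathcomp Require Import all_boot finmap.
From mathcomp Require Import boolp classical_sets.
Local Open Scope fset_scope.
Set Implicit Arguments.
Unset Strict Implicit.

Section Argumentation.
Variables (L : choiceType) (derives : {fset L} -> L -> Prop)
  (contr : L -> L -> Prop) (hat : {fset L} -> {fset L}).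

Local Notation att := (attacks contr hat).
Local Notation isA := (isArg derives).
Local Notation dfd := (defends derives contr hat).
Local Notation adm := (admissible derives contr hat).
Local Notation cmp := (complete derives contr hat).

Definition restrict (S : L -> Prop) (E : arg L -> Prop) : arg L -> Prop :=
  fun a => E a /\ isA S a.

Definition defense_closed (S : L -> Prop) (X : arg L -> Prop) : Prop :=
  forall a, isA S a -> dfd S X a -> X a.

Definition grounded_ext (S : L -> Prop) : arg L -> Prop :=
  fun a => forall X, defense_closed S X -> X a.

Lemma fset_split (G : {fset L}) (A B : L -> Prop) :
  (forall x, x \in G -> A x \/ B x) ->
  exists G1 G2, [/\ G = G1 `|` G2, forall x, x \in G1 -> A x
                                  & forall x, x \in G2 -> B x].
Proof.
move=> GAB; exists [fset x in G | `[< A x >]], [fset x in G | ~~ `[< A x >]].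
split.
- by apply/fsetP => x; rewrite !inE; case: (x \in G); case: `[< A x >].
- by move=> x; rewrite !inE => /andP [_ /asboolP].
- by move=> x; rewrite !inE => /andP [/GAB [|//] + /asboolP].
Qed.

Lemma defends_subE S (E E' : arg L -> Prop) a :
  subE E E' -> dfd S E a -> dfd S E' a.
Proof.
move=> EE' Ea b bS ba; have [c [Ec cb]] := Ea b bS ba.
by exists c; split=> //; apply: EE'.
Qed.

Lemma extension_complete s S E :
  extension s derives contr hat S E -> cmp S E.
Proof. by case: s => -[]. Qed.

Lemma admissible_add S (D : arg L -> Prop) a :
  adm S D -> isA S a -> dfd S D a -> adm S (D `|` [set a])%classic.
Proof.
move=> [DS [Dcf Ddf]] aS Da; split; last split.
- by move=> x [/DS|->].
- have Dacf c : D c -> ~ att c a.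
    move=> Dc ca; have [d [Dd dc]] := Da c (DS c Dc) ca; exact: Dcf dc.
  move=> x y [Dx|->] [Dy|->] xy.
  + exact: Dcf xy.
  + exact: Dacf xy.
  + have [c [Dc ca]] := Ddf y Dy a aS xy; exact: Dacf ca.
  + have [c [Dc ca]] := Da a aS xy; exact: Dacf ca.
- have DDa : subE D (D `|` [set a])%classic by move=> z Dz; left.
  by move=> x [/Ddf|->]; [apply: defends_subE | apply: defends_subE Da].
Qed.

Lemma admissible_preferred S (D : arg L -> Prop) :
  adm S D -> exists M, preferred derives contr hat S M /\ subE D M.
Proof.
move=> [DS [Dcf Ddf]].
(* Zorn is applied to the X with D ∪ X admissible, so the empty chain is harmless. *)
pose P (X : set (arg L)) := adm S (D `|` X)%classic.
have chainP (F : set (set (arg L))) : (F `<=` P)%classic ->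
    total_on F subset -> P (\bigcup_(X in F) X)%classic.
  move=> FP Ftot; split; last split.
  - move=> a [Da|[X FX Xa]]; first exact: DS.
    by have [XS _] := FP X FX; apply: XS; right.
  - move=> a b [Da|[X FX Xa]] [Db|[Y FY Yb]].
    + exact: Dcf.
    + by have [_ [Ycf _]] := FP Y FY; apply: Ycf; [left|right].
    + by have [_ [Xcf _]] := FP X FX; apply: Xcf; [right|left].
    + have [XY|YX] := Ftot X Y FX FY.
      * by have [_ [Ycf _]] := FP Y FY; apply: Ycf; right => //; apply: XY.
      * by have [_ [Xcf _]] := FP X FX; apply: Xcf; right => //; apply: YX.
  - move=> a [Da|[X FX Xa]].
    + by apply: (defends_subE _ (Ddf a Da)) => z Dz; left.
    + have [_ [_ Xdf]] := FP X FX; apply: (defends_subE _ (Xdf a (or_intror Xa))).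
      by move=> z [Dz|Xz]; [left|right; exists X].
have [A [PA Amax]] := Zorn_bigcup chainP.
have Amax' B : P B -> subE A B -> subE B A.
  move=> PB AB b Bb; apply: contrapT => nAb.
  by apply: (Amax B) => //; split => // /(_ b Bb).
have MS : cmp S (D `|` A)%classic.
  split=> // a aS Ma.
  have PAa : P (A `|` [set a])%classic by rewrite /P setUA; apply: admissible_add.
  by right; apply: (Amax' _ PAa) => [x|]; [left|right].
exists (D `|` A)%classic; split; last by move=> x; left.
split=> // E' [E'adm _] ME' a E'a; right.
apply: (Amax' E') => [|x Ax|//]; last by apply: ME'; right.
by rewrite /P setUidr // => x Dx; apply: ME'; left.
Qed.

Lemma grounded_ext_grounded S : grounded derives contr hat S (grounded_ext S).
Proof.
set G := grounded_ext S.
have complete_closed E : cmp S E -> defense_closed S E by case.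
have GS a : G a -> isA S a by move/(_ (isA S)); apply=> b.
have G_closed : defense_closed S G.
  move=> a aS Ga X Xcl; apply: (Xcl) => //.
  by apply: (defends_subE _ Ga) => c /(_ X Xcl).
have G_defended a : G a -> dfd S G a.
  have Fcl : defense_closed S (fun b => isA S b /\ dfd S G b).
    move=> b bS Fb; split=> //.
    by apply: (defends_subE _ Fb) => c [cS]; apply: G_closed.
  by move=> /(_ _ Fcl) [].
(* Conflict-freeness is inherited from any complete extension; one exists by Zorn. *)
have set0_adm : adm S set0 by split; last split.
have [E [[[[_ [Ecf _]] Ecl] _] _]] := admissible_preferred set0_adm.
split; first (split=> //; split=> //; split=> //).
- by move=> a b /(_ E Ecl) Ea /(_ E Ecl); apply: Ecf.
- by move=> E' /complete_closed E'cl a /(_ E' E'cl).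
Qed.

Lemma grounded_sub_closed S E X :
  grounded derives contr hat S E -> defense_closed S X -> subE E X.
Proof.
move=> [_ Eleast] Xcl a /(Eleast _ (grounded_ext_grounded S).1); exact.
Qed.

Section MonotoneHat.
Hypothesis hat_monotone : forall D D' : {fset L}, hat D `<=` hat (D `|` D').

Lemma attacks_supp a' a d : Supp a' `<=` Supp a -> att d a' -> att d a.
Proof.
move=> a'a [f [fa' fd]]; exists f; split=> //.
have := hat_monotone (Supp a') (Supp a).
by rewrite (fsetUidPr _ _ a'a) => /fsubsetP; apply.
Qed.

Lemma complete_supp_closed S E c c' :
  cmp S E -> E c -> isA S c' -> Supp c' `<=` Supp c -> E c'.
Proof.
move=> [[_ [_ Edf]] Ecl] Ec c'S c'c; apply: Ecl => // b bS bc'.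
exact: (Edf c Ec b bS (attacks_supp c'c bc')).
Qed.

Section NonInterference.
Variables (Atom : Type) (atoms : L -> Atom -> Prop).
Hypothesis hat0 : hat fset0 = fset0.
Hypothesis derives_pre_relevant : pre_relevant_derives atoms derives.
Hypothesis setting_prime : prime_setting atoms derives contr hat.
Variables (S1 S2 : L -> Prop) (phi : L).
Hypothesis S1phi_indep_S2 : indep atoms (unionP S1 (singleP phi)) S2.

Local Notation S := (unionP S1 S2).

Lemma isArg_unionl a : isA S1 a -> isA S a.
Proof. by move=> [aS1 da]; split=> // x /aS1; left. Qed.

Lemma AtomsOf_subset (A B : L -> Prop) :
  (forall x, A x -> B x) -> forall a, AtomsOf atoms A a -> AtomsOf atoms B a.
Proof. by move=> AB a [x [/AB Bx xa]]; exists x. Qed.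

Lemma indep_subset (A A' B B' : L -> Prop) :
  (forall x, A' x -> A x) -> (forall x, B' x -> B x) ->
  indep atoms A B -> indep atoms A' B'.
Proof.
by move=> A'A B'B AB a /(AtomsOf_subset A'A) + /(AtomsOf_subset B'B); apply: AB.
Qed.

Lemma attacks_restrict c b :
  isA S c -> (forall x, x \in Supp b -> S1 x) -> att c b ->
  exists c', [/\ isA S1 c', Supp c' `<=` Supp c & att c' b].
Proof.
move=> [cS dc] bS1 [f [fb fc]].
have [G1 [G2 [defG G1S1 G2S2]]] := fset_split cS.
have S1_indep_S2 : indep atoms S1 S2.
  by apply: indep_subset S1phi_indep_S2 => // x; left.
have fb0 : f \in hat (Supp b `|` fset0) by rewrite fsetU0.
have none_in_fset0 x : x \in fset0 -> S2 x by rewrite inE.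
rewrite defG in dc.
case: (setting_prime S1_indep_S2 (AtomsOf_subset G1S1) (AtomsOf_subset bS1)
  (AtomsOf_subset G2S2) (AtomsOf_subset none_in_fset0) fc fb0 dc).
- move=> [G' [f' [c' [G'G1 [f'b [f'c' dc']]]]]].
  exists (G', c'); split; last by exists f'.
  + by split=> // x /(fsubsetP G'G1) /G1S1.
  + by apply: (fsubset_trans G'G1); rewrite defG fsubsetUl.
- by move=> [_ [f2 [_ [_ [+ _]]]]]; rewrite hat0 inE.
Qed.

Lemma derives_restrict G : (forall x, x \in G -> S x) -> derives G phi ->
  exists2 G', G' `<=` G & isA S1 (G', phi).
Proof.
move=> GS dG; have [G1 [G2 [defG G1S1 G2S2]]] := fset_split GS.
have G1phi_indep_G2 : indep atoms (unionP (fs G1) (singleP phi)) (fs G2).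
  by apply: indep_subset S1phi_indep_S2 => [x [/G1S1|]|//]; [left|right].
rewrite defG in dG.
have [G' [G'G1 dG']] := derives_pre_relevant G1phi_indep_G2 dG.
exists G'; first by apply: (fsubset_trans G'G1); rewrite defG fsubsetUl.
by split=> // x /(fsubsetP G'G1) /G1S1.
Qed.

Lemma complete_restrict E : cmp S E -> cmp S1 (restrict S1 E).
Proof.
move=> Ecmp; have [[ES [Ecf Edf]] Ecl] := Ecmp.
split; first split; [by move=> a [] | split |].
- by move=> a b [Ea _] [Eb _]; apply: Ecf.
- move=> a [Ea aS1] b bS1 ba.
  have [c [Ec cb]] := Edf a Ea b (isArg_unionl bS1) ba.
  have [c' [c'S1 c'c c'b]] := attacks_restrict (ES c Ec) bS1.1 cb.
  exists c'; split=> //; split=> //.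
  exact: complete_supp_closed Ecmp Ec (isArg_unionl c'S1) c'c.
- move=> a aS1 Ea; split=> //; apply: Ecl; first exact: isArg_unionl.
  move=> b bS ba; have [b' [b'S1 b'b b'a]] := attacks_restrict bS aS1.1 ba.
  have [c [[Ec _] cb']] := Ea b' b'S1 b'a.
  by exists c; split=> //; apply: attacks_supp cb'.
Qed.

Lemma admissible_lift E : adm S1 E -> adm S E.
Proof.
move=> [ES1 [Ecf Edf]]; split; last split => //.
- by move=> a /ES1 /isArg_unionl.
- move=> a Ea b bS ba.
  have [b' [b'S1 b'b b'a]] := attacks_restrict bS (ES1 a Ea).1 ba.
  have [c [Ec cb']] := Edf a Ea b' b'S1 b'a.
  by exists c; split=> //; apply: attacks_supp cb'.
Qed.

Lemma admissible_merge E E1 : cmp S E -> cmp S1 E1 -> subE (restrict S1 E) E1 ->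
  adm S (E1 `|` E)%classic.
Proof.
move=> Ecmp [E1adm _] EE1; have [[ES [Ecf Edf]] _] := Ecmp.
have [E1S [E1cf E1df]] := admissible_lift E1adm.
have E_to_E1 c a : E c -> E1 a -> att c a -> exists2 c', E1 c' & att c' a.
  move=> Ec E1a ca.
  have [c' [c'S1 c'c c'a]] := attacks_restrict (ES c Ec) (E1adm.1 a E1a).1 ca.
  exists c' => //; apply: EE1; split=> //.
  exact: complete_supp_closed Ecmp Ec (isArg_unionl c'S1) c'c.
split; last split.
- by move=> a [/E1S|/ES].
- move=> a b [E1a|Ea] [E1b|Eb] ab.
  + exact: E1cf ab.
  + have [c [Ec ca]] := Edf b Eb a (E1S a E1a) ab.
    have [c' E1c' c'a] := E_to_E1 c a Ec E1a ca; exact: E1cf c'a.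
  + have [a' E1a' a'b] := E_to_E1 a b Ea E1b ab; exact: E1cf a'b.
  + exact: Ecf ab.
- by move=> a [/E1df|/Edf]; apply: defends_subE => z; [left|right].
Qed.

(* The invariant ranges over all S1-arguments with smaller support, so that it
   survives the defence step; it places the grounded extension of S inside every
   complete extension of S1. *)
Lemma restrict_defense_closed E1 : cmp S1 E1 ->
  defense_closed S (fun a => isA S a /\
    forall a', isA S1 a' -> Supp a' `<=` Supp a -> E1 a').
Proof.
move=> [_ E1cl] b bS bdf; split=> // a' a'S1 a'b.
apply: E1cl => // d dS1 da'.
have [c [[cS cX] cd]] := bdf d (isArg_unionl dS1) (attacks_supp a'b da').
have [c' [c'S1 c'c c'd]] := attacks_restrict cS dS1.1 cd.
by exists c'; split=> //; apply: cX.
Qed.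

Lemma grounded_restrict E :
  grounded derives contr hat S E -> grounded derives contr hat S1 (restrict S1 E).
Proof.
move=> Egr; split; first exact: complete_restrict Egr.1.
move=> E1 E1cmp a [Ea aS1].
have [_ E1sub] := grounded_sub_closed Egr (restrict_defense_closed E1cmp) Ea.
exact: E1sub aS1 (fsubset_refl _).
Qed.

Lemma preferred_restrict E :
  preferred derives contr hat S E ->
  preferred derives contr hat S1 (restrict S1 E).
Proof.
move=> [Ecmp Emax]; split; first exact: complete_restrict.
move=> E1 E1cmp EE1 a E1a.
have E1E_adm := admissible_merge Ecmp E1cmp EE1.
have [M [[Mcmp _] E1EM]] := admissible_preferred E1E_adm.
have ME := Emax M Mcmp (fun x Ex => E1EM x (or_intror Ex)).
by split; [apply/ME/E1EM; left | exact: E1cmp.1.1 a E1a].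
Qed.

Lemma grounded_extend E : grounded derives contr hat S1 E ->
  exists M, grounded derives contr hat S M /\ subE (restrict S1 M) E.
Proof.
move=> [Ecmp _]; have Ggr := grounded_ext_grounded S.
by exists (grounded_ext S); split; last exact: (grounded_restrict Ggr).2 _ Ecmp.
Qed.

Lemma preferred_extend E : preferred derives contr hat S1 E ->
  exists M, preferred derives contr hat S M /\ subE (restrict S1 M) E.
Proof.
move=> [Ecmp Emax].
have [M [Mpr EM]] := admissible_preferred (admissible_lift Ecmp.1).
exists M; split=> //; apply: Emax; first exact: complete_restrict Mpr.1.
by move=> a Ea; split; [apply: EM | apply: Ecmp.1.1].
Qed.

Lemma complete_restrict_conc E a : cmp S E -> E a -> Conc a = phi ->
  exists a', restrict S1 E a' /\ Conc a' = phi.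
Proof.
move=> Ecmp Ea aphi; have [aS da] := Ecmp.1.1 a Ea; rewrite aphi in da.
have [G' G'a G'S1] := derives_restrict aS da.
exists (G', phi); split=> //; split=> //.
exact: complete_supp_closed Ecmp Ea (isArg_unionl G'S1) G'a.
Qed.

Lemma nmsim_restrict s :
  (forall E, extension s derives contr hat S E ->
     extension s derives contr hat S1 (restrict S1 E)) ->
  nmsim s derives contr hat S1 phi -> nmsim s derives contr hat S phi.
Proof.
move=> ext_restrict S1phi E /ext_restrict /S1phi [a [[Ea _] aphi]].
by exists a.
Qed.

Lemma nmsim_extend s :
  (forall E, extension s derives contr hat S1 E ->
     exists M, extension s derives contr hat S M /\ subE (restrict S1 M) E) ->
  nmsim s derives contr hat S phi -> nmsim s derives contr hat S1 phi.
Proof.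
move=> ext_extend Sphi E /ext_extend [M [Mext ME]].
have [a [Ma aphi]] := Sphi M Mext.
have [a' [Ma' a'phi]] := complete_restrict_conc (extension_complete Mext) Ma aphi.
by exists a'; split=> //; apply: ME.
Qed.

Lemma nmsim_noninterference s :
  nmsim s derives contr hat S1 phi <-> nmsim s derives contr hat S phi.
Proof.
case: s; split.
- by apply: nmsim_restrict; apply: grounded_restrict.
- by apply: nmsim_extend; apply: grounded_extend.
- by apply: nmsim_restrict; apply: preferred_restrict.
- by apply: nmsim_extend; apply: preferred_extend.
Qed.

End NonInterference.
End MonotoneHat.
End Argumentation.

Theorem theorem1
  (L : choiceType) (Atom : Type) (atoms : L -> Atom -> Prop)
  (derives : {fset L} -> L -> Prop) (contr : L -> L -> Prop)
  (hat : {fset L} -> {fset L})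
  (hat0 : hat fset0 = fset0)
  (HPR : setting_pre_relevance atoms derives contr hat) :
  forall (s : sem), (s = Grd \/ s = Prf) ->
  forall (S1 S2 : L -> Prop) (phi : L),
    indep atoms (unionP S1 (singleP phi)) S2 ->
    (nmsim s derives contr hat S1 phi <->
     nmsim s derives contr hat (unionP S1 S2) phi).
Proof.
(* The hypothesis on [s] is vacuous: [sem] has no other constructors. *)
move=> s _ S1 S2 phi S1phi_indep_S2; case: HPR => pre_rel primeness hat_mono.
exact (nmsim_noninterference hat_mono hat0 pre_rel primeness S1phi_indep_S2 s).
Qed.
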